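(* Consider coordination games in which every player has strategy set $\{1,2\}$, with solution set $\mathrm{NE}$ (pure Nash equilibria). (1) If $G$ is a cycle on $n\ge4$ nodes, then $ST(\mathrm{NE})\setminus\mathrm{NE}\neq\emptyset$; moreover, if $n$ is even, there is $s\in ST(\mathrm{NE})\setminus\mathrm{NE}$ with $\mathrm{sw}(s)=|E|-|N|\,(=0)$. (2) If $G$ is the complete graph on $n$ nodes, then $ST(\mathrm{NE})\setminus\mathrm{NE}\neq\emptyset$ if and only if $n$ is even. (3) If $G$ is a forest with at least one edge, then $ST(\mathrm{NE})\setminus\mathrm{NE}\neq\emptyset$.
   Context: The coordination game on a finite simple undirected graph $G=(N,E)$: players are nodes, each chooses $s_i\in\{1,2\}$, and $u_i(s)$ is the number of neighbours $j$ of $i$ with $s_j=s_i$; $\mathrm{sw}(s)=\sum_iu_i(s)$. For a solution set $D$, a transition is a profile $t$ such that for each $i$ there is $d\in D$ with $t_i=d_i$. $\mathrm{BR}_i(s_{-i})$ is the set of best responses of $i$. A stable transition is a transition $s$ such that for every $i$ with $s_i\notin\mathrm{BR}_i(s_{-i})$ there is $j\neq i$ with $s_j\notin\mathrm{BR}_j(s_{-j})$ and some $\hat s_j\in\mathrm{BR}_j(s_{-j})$ with $s_i\in\mathrm{BR}_i(\hat s_j,s_{-\{i,j\}})$; $ST(D)$ denotes the set of stable transitions. *)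

From mathcomp Require Import all_boot all_order all_algebra.
Set Implicit Arguments. Unset Strict Implicit. Unset Printing Implicit Defensive.

(* A strategy is a bool: true encodes strategy 1, false encodes strategy 2.
   A (pure) profile on a finite player set T is a function T -> bool. *)
Section Game.
Variables (T : finType) (e : rel T).

Definition upd (s : T -> bool) (i : T) (a : bool) : T -> bool :=
  fun j => if j == i then a else s j.

Definition util (s : T -> bool) (i : T) : nat :=
  #|[set j | e i j && (s j == s i)]|.

Definition sw (s : T -> bool) : nat := \sum_(i : T) util s i.

Definition nedges : nat := #|[set p : T * T | e p.1 p.2]| %/ 2.

Definition BR (s : T -> bool) (i : T) (a : bool) : Prop :=
  forall b : bool, util (upd s i b) i <= util (upd s i a) i.

Definition NE (s : T -> bool) : Prop := forall i, BR s i (s i).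

Definition transition (D : (T -> bool) -> Prop) (t : T -> bool) : Prop :=
  forall i, exists d, D d /\ t i = d i.

Definition stable_transition (D : (T -> bool) -> Prop) (s : T -> bool) : Prop :=
  transition D s /\
  forall i, ~ BR s i (s i) ->
    exists j, j != i /\ ~ BR s j (s j) /\
      exists shat : bool, BR s j shat /\ BR (upd s j shat) i (s i).

End Game.

Definition simple_graph (T : finType) (e : rel T) : Prop :=
  symmetric e /\ irreflexive e.

Definition forest (T : finType) (e : rel T) : Prop :=
  simple_graph e /\
  forall p : seq T, uniq p -> 3 <= size p -> ~~ cycle e p.

Definition cycle_graph (n : nat) : rel 'I_n :=
  fun i j => (val j == (val i).+1 %% n) || (val i == (val j).+1 %% n).

Definition complete_graph (n : nat) : rel 'I_n := fun i j => i != j.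

Arguments cycle_graph n : clear implicits.
Arguments complete_graph n : clear implicits.

From mathcomp Require Import all_boot all_order all_algebra.
From mathcomp Require Import zify.
Set Implicit Arguments. Unset Strict Implicit. Unset Printing Implicit Defensive.

(* The constant profiles are equilibria, so every profile is a transition of
   NE and only the rescue condition of a stable transition matters.  An
   unhappy neighbour j of i playing the other strategy best-responds by
   switching to s_i, and this makes s_i a best response for i as soon as i
   trails by at most two neighbours.  On a cycle the alternating profile makes
   every vertex away from the wrap-around edge unhappy, and every vertex has
   such a neighbour; on K_n with n even an equal split makes everybody unhappy.
   On K_n with n odd the unhappy players all play the strict minority
   strategy, so a rescuer agrees with i and its switch cannot help.  In a
   forest, take a leaf u with neighbour v, let v play 2 and let each component
   of the forest minus v play 1 exactly when it meets a set W of just over half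
   of the neighbours of v, with u in W: then v and u rescue each other and v
   rescues every other unhappy vertex. *)

Lemma subset_of_card (T : finType) (A : {set T}) k :
  k <= #|A| -> exists2 B : {set T}, B \subset A & #|B| = k.
Proof.
case/card_geqP => s [s_uniq s_size sA]; exists [set x in s].
  by apply/subsetP => x; rewrite inE => /sA.
by rewrite cardsE -s_size; apply/card_uniqP.
Qed.

Lemma card_arcs (T : finType) (e : rel T) :
  #|[set p : T * T | e p.1 p.2]| = \sum_i #|[set j | e i j]|.
Proof.
transitivity (\sum_(i : T) \sum_(j | e i j) 1).
  by rewrite pair_big_dep -sum1_card; apply: eq_bigl => p; rewrite inE.
by apply: eq_bigr => i _; rewrite -sum1_card; apply: eq_bigl => j; rewrite inE.
Qed.

Section BestResponse.
Variables (T : finType) (e : rel T).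
Hypothesis e_irr : irreflexive e.

Definition nbr_count (s : T -> bool) (i : T) (b : bool) : nat :=
  #|[set j | e i j && (s j == b)]|.

Lemma nbr_count0 s i b : (forall j, e i j -> s j != b) -> nbr_count s i b = 0.
Proof.
move=> sNb; apply/eqP; rewrite cards_eq0; apply/eqP/setP => j; rewrite !inE.
by apply/negP => /andP[/sNb/negPf->].
Qed.

Lemma nbr_countC s i b : nbr_count s i b + nbr_count s i (~~ b) = #|[set j | e i j]|.
Proof.
rewrite -(cardsID [set j | s j == b] [set j | e i j]); congr (_ + _).
all: apply: eq_card => j; rewrite !inE // andbC; by case: (s j); case: b.
Qed.

Lemma nbr_count_upd s i j c b : j != i ->
  nbr_count (upd s j c) i b + (e i j && (s j == b)) =
  nbr_count s i b + (e i j && (c == b)).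
Proof.
move=> ji; rewrite /nbr_count (cardsD1 j [set k | _ && _]).
rewrite (cardsD1 j [set k | e i k && (s k == b)]) !inE /upd eqxx.
suff -> : [set k | e i k && ((if k == j then c else s k) == b)] :\ j =
          [set k | e i k && (s k == b)] :\ j by lia.
by apply/setP => k; rewrite !inE; case: eqP.
Qed.

Lemma util_upd s i b : util e (upd s i b) i = nbr_count s i b.
Proof.
rewrite /util /nbr_count; apply: eq_card => j; rewrite !inE /upd eqxx.
by case: (j =P i) => [->|//]; rewrite e_irr.
Qed.

Lemma BR_count s i a : BR e s i a <-> nbr_count s i (~~ a) <= nbr_count s i a.
Proof.
split=> [/(_ (~~ a))|le_a b]; first by rewrite !util_upd.
by rewrite !util_upd; case: a b le_a => [] [].
Qed.

Lemma notBR_count s i a : ~ BR e s i a <-> nbr_count s i a < nbr_count s i (~~ a).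
Proof.
rewrite ltnNge; split=> [nBR|/negP nle /BR_count //].
by apply/negP => /BR_count.
Qed.

Lemma NE_const c : NE e (fun=> c).
Proof. by move=> i; apply/BR_count; rewrite nbr_count0 // => j _; case: c. Qed.

Lemma transition_NE s : transition (NE e) s.
Proof. by move=> i; exists (fun=> s i); split => //; apply: NE_const. Qed.

Lemma notBR_disagreeing_nbrs s i j :
  (forall k, e i k -> s k = ~~ s i) -> e i j -> ~ BR e s i (s i).
Proof.
move=> disagree eij; apply/notBR_count; rewrite nbr_count0 => [|k /disagree->].
  by apply/card_gt0P; exists j; rewrite inE eij (disagree _ eij) eqxx.
by case: (s i).
Qed.

Lemma notBR_upd_agreeing s i j c : j != i -> s j = s i ->
  ~ BR e s i (s i) -> ~ BR e (upd s j c) i (s i).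
Proof.
move=> ji sji /notBR_count lt; apply/notBR_count.
have := nbr_count_upd s c (s i) ji; have := nbr_count_upd s c (~~ s i) ji.
by rewrite sji eqxx; case: (e i j) (s i) c lt => [] [] [] /=; lia.
Qed.

Lemma unhappy_nbr_switch s i j : e i j -> s j = ~~ s i -> ~ BR e s j (s j) ->
  nbr_count s i (~~ s i) <= (nbr_count s i (s i)).+2 ->
  BR e s j (s i) /\ BR e (upd s j (s i)) i (s i).
Proof.
move=> eij sj /notBR_count; rewrite sj negbK => unhappy_j close_i.
have ji : j != i by apply: contra_eqN sj => /eqP->; case: (s i).
split; first by apply/BR_count; rewrite ltnW.
apply/BR_count.
have := nbr_count_upd s (s i) (s i) ji; have := nbr_count_upd s (s i) (~~ s i) ji.
by rewrite eij sj eqxx; case: (s i) close_i => /=; lia.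
Qed.

Lemma stable_transition_NE s :
  (forall i, ~ BR e s i (s i) -> exists j, [/\ e i j, s j = ~~ s i,
     ~ BR e s j (s j) & nbr_count s i (~~ s i) <= (nbr_count s i (s i)).+2]) ->
  stable_transition e (NE e) s.
Proof.
move=> rescue; split=> [|i /rescue [j [eij sj unhappy_j close_i]]].
  exact: transition_NE.
have [BRj BRi] := unhappy_nbr_switch eij sj unhappy_j close_i.
exists j; split; first by apply: contra_eqN sj => /eqP->; case: (s i).
by split=> //; exists (s i).
Qed.

End BestResponse.

Section Complete.
Variable n : nat.
Local Notation K := (complete_graph n).

Lemma complete_graph_irr : irreflexive K.
Proof. by move=> i; rewrite /complete_graph eqxx. Qed.

Definition nplayers (s : 'I_n -> bool) (b : bool) : nat := #|[set j | s j == b]|.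

Lemma nplayersC s b : nplayers s b + nplayers s (~~ b) = n.
Proof.
rewrite -[n in RHS]card_ord -(cardsC [set j | s j == b]); congr (_ + _).
by apply: eq_card => j; rewrite !inE; case: (s j); case: b.
Qed.

Lemma nbr_count_complete s i b : nbr_count K s i b + (s i == b) = nplayers s b.
Proof.
rewrite /nplayers (cardsD1 i [set j | s j == b]) inE addnC; congr (_ + _).
by apply: eq_card => j; rewrite !inE /complete_graph eq_sym.
Qed.

Lemma complete_notBR s i : ~ BR K s i (s i) <-> nplayers s (s i) <= nplayers s (~~ s i).
Proof.
rewrite notBR_count; last exact: complete_graph_irr.
have := nbr_count_complete s i (s i); have := nbr_count_complete s i (~~ s i).
by rewrite eqxx; case: (s i) => /=; lia.
Qed.

Lemma complete_odd_ST_NE s : odd n -> stable_transition K (NE K) s -> NE K s.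
Proof.
move=> n_odd [_ rescued] i; have irr := complete_graph_irr.
apply/(BR_count irr); rewrite leqNgt; apply/negP => lt.
have unhappy_i : ~ BR K s i (s i) by apply/(notBR_count irr).
have [j [ji [unhappy_j [c [_ BRi]]]]] := rescued i unhappy_i.
suff sji : s j = s i by exact: notBR_upd_agreeing BRi.
have := nplayersC s (s i).
move/complete_notBR: unhappy_j; move/complete_notBR: unhappy_i.
by case: (s i) (s j) => [] [] //=; lia.
Qed.

Lemma complete_even_ST : 0 < n -> ~~ odd n ->
  exists s, stable_transition K (NE K) s /\ ~ NE K s.
Proof.
move=> n_gt0 n_even.
have [A _ cardA] : exists2 A : {set 'I_n}, A \subset setT & #|A| = n./2.
  by apply: subset_of_card; rewrite cardsT card_ord; lia.
pose s j := j \in A.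
have half_true : nplayers s true = n./2.
  by rewrite -cardA; apply: eq_card => j; rewrite !inE eqb_id.
have balanced b : nplayers s b = n./2.
  by case: b => //; have := nplayersC s true => /=; lia.
have unhappy i : ~ BR K s i (s i) by apply/complete_notBR; rewrite !balanced.
exists s; split; last by move/(_ (Ordinal n_gt0)); apply: unhappy.
apply: (stable_transition_NE complete_graph_irr) => i _.
have : 0 < nplayers s (~~ s i) by rewrite balanced; lia.
case/card_gt0P => j; rewrite inE => /eqP sj.
exists j; split.
- by apply/eqP => ij; move: sj; rewrite ij; case: (s j).
- exact: sj.
- exact: unhappy.
- have := nbr_count_complete s i (s i); have := nbr_count_complete s i (~~ s i).
  by rewrite !balanced eqxx; case: (s i) => /=; lia.
Qed.

End Complete.

Section Cycle.
Variable n : nat.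
Local Notation C := (cycle_graph n).

Lemma val_ordS (i : 'I_n) : val (ordS i) = if i.+1 == n then 0 else i.+1.
Proof.
change (i.+1 %% n = if i.+1 == n then 0 else i.+1); have := ltn_ord i.
case: eqP => [-> _|neq lt]; first exact: modnn.
by apply: modn_small; lia.
Qed.

Lemma cycle_graph_sym : symmetric C.
Proof. by move=> i j; rewrite /cycle_graph orbC. Qed.

Lemma cycle_graphE i j : C i j = (j == ordS i) || (j == ord_pred i).
Proof.
by rewrite /cycle_graph -(can2_eq (@ordSK n) (@ord_predK n)) [ordS j == i]eq_sym.
Qed.

Definition alternating (j : 'I_n) : bool := odd j.

Lemma alternating_nbr i j : C i j -> (0 < i < n.-1) || ~~ odd n ->
  alternating j = ~~ alternating i.
Proof.
rewrite /alternating cycle_graphE => /orP[]/eqP-> cond.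
  by rewrite val_ordS /=; have := ltn_ord i; case: ifP => /eqP; lia.
have := congr1 val (ord_predK i); rewrite val_ordS /=.
by have := ltn_ord (ord_pred i); case: ifP => /eqP; lia.
Qed.

Lemma alternating_sw_even : ~~ odd n -> sw C alternating = 0.
Proof.
move=> n_even; rewrite /sw big1 // => i _.
apply: nbr_count0 => j /alternating_nbr->; last by rewrite n_even orbT.
by case: (alternating i).
Qed.

Hypothesis n_gt2 : 2 < n.

Lemma ordS_neq (i : 'I_n) : ordS i != i.
Proof. by rewrite -val_eqE val_ordS /=; case: ifP => /eqP; lia. Qed.

Lemma ordS_neq_ord_pred (i : 'I_n) : ordS i != ord_pred i.
Proof.
rewrite -(inj_eq (@ordS_inj n)) ord_predK -val_eqE !val_ordS /=.
have := ltn_ord i; do 2 case: ifP => /eqP; lia.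
Qed.

Lemma cycle_graph_irr : irreflexive C.
Proof.
move=> i; rewrite cycle_graphE eq_sym (negbTE (ordS_neq i)) /=.
by apply: contraNF (ordS_neq i) => /eqP {1}->; rewrite ord_predK.
Qed.

Lemma card_cycle_nbrs i : #|[set j | C i j]| = 2.
Proof.
have -> : [set j | C i j] = [set ordS i; ord_pred i].
  by apply/setP => j; rewrite !inE cycle_graphE.
by rewrite cards2 ordS_neq_ord_pred.
Qed.

Lemma nedges_cycle_graph : nedges C = n.
Proof.
rewrite /nedges card_arcs (eq_bigr (fun=> 2)) => [|i _]; last exact: card_cycle_nbrs.
by rewrite sum_nat_const card_ord mulnK.
Qed.

Lemma alternating_interior_notBR (k : 'I_n) : 0 < k < n.-1 ->
  ~ BR C alternating k (alternating k).
Proof.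
move=> k_int; apply: (notBR_disagreeing_nbrs cycle_graph_irr (j := ordS k)).
  by move=> j /alternating_nbr->; rewrite ?k_int.
by rewrite cycle_graphE eqxx.
Qed.

End Cycle.

Lemma alternating_ST n : 3 < n ->
  stable_transition (cycle_graph n) (NE (cycle_graph n)) (@alternating n).
Proof.
move=> n_gt3; have n_gt2 := ltnW n_gt3.
apply: (stable_transition_NE (cycle_graph_irr n_gt2)) => i _.
have [j [eij j_int]] : exists j, cycle_graph n i j /\ 0 < j < n.-1.
  have := ltn_ord i; case: (ltnP i.+2 n) => [lt _|ge lt].
    exists (ordS i); rewrite cycle_graphE eqxx val_ordS /=.
    by split=> //; case: ifP => /eqP; lia.
  exists (ord_pred i); rewrite cycle_graphE eqxx orbT; split=> //.
  have := congr1 val (ord_predK i); rewrite val_ordS /=; case: ifP => /eqP; lia.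
exists j; split.
- exact: eij.
- by rewrite (alternating_nbr (i := j) (j := i)) ?negbK ?j_int // cycle_graph_sym.
- exact: alternating_interior_notBR.
- have := nbr_countC (cycle_graph n) (@alternating n) i (alternating i).
  by rewrite card_cycle_nbrs //; lia.
Qed.

Lemma alternating_notNE n : 2 < n -> ~ NE (cycle_graph n) (@alternating n).
Proof.
move=> n_gt2; have one_lt : 1 < n by lia.
by move/(_ (Ordinal one_lt)); apply: alternating_interior_notBR => /=; lia.
Qed.

Section Forest.
Variables (T : finType) (e : rel T).
Hypotheses (e_sym : symmetric e) (e_irr : irreflexive e).
Hypothesis e_acyclic : forall p : seq T, uniq p -> 3 <= size p -> ~~ cycle e p.

Lemma path_head_extend_or_leaf x a r : uniq (x :: a :: r) -> path e x (a :: r) ->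
  (exists2 y, e x y & y \notin x :: a :: r) \/ (forall y, e x y -> y = a).
Proof.
move=> p_uniq p_path.
case: (pickP (fun y => e x y && (y \notin x :: a :: r))) => [y /andP[]|in_p].
  by left; exists y.
right=> y exy; apply/eqP; apply: contraT => ya.
have y_r : y \in r.
  move: (in_p y); rewrite /= exy !inE (negbTE ya) /=.
  by case: eqP => [yx|_ /negbFE //]; move: exy; rewrite yx e_irr.
case/splitPr: y_r p_uniq p_path => r1 r2 p_uniq p_path.
have c_uniq : uniq (x :: a :: rcons r1 y).
  by move: p_uniq; rewrite -cat_rcons -cat_cons -cat_cons cat_uniq => /andP[].
have c_size : 3 <= size (x :: a :: rcons r1 y) by rewrite /= size_rcons.
case/negP: (e_acyclic c_uniq c_size).
move: p_path; rewrite /= cat_path /= => /andP[exa /and3P[r1_path r1y _]].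
by rewrite rcons_path /= exa rcons_path r1_path r1y /= last_rcons e_sym.
Qed.

Lemma leaf_of_path k x a r : #|T| <= size r + k -> uniq (x :: a :: r) ->
  path e x (a :: r) -> exists u v, e u v /\ forall w, e u w -> w = v.
Proof.
elim: k x a r => [|k IHk] x a r T_size p_uniq p_path;
  have [[y exy y_new]|x_leaf] := path_head_extend_or_leaf p_uniq p_path;
  try by exists x, a; split=> //; case/andP: p_path.
all: have long : size (y :: x :: a :: r) <= #|T|.
all: try by rewrite -(card_uniqP _) ?max_card //= y_new.
  by move: T_size long => /=; lia.
apply: (IHk y x (a :: r)); first by move: T_size long => /=; lia.
  by rewrite cons_uniq y_new.
by rewrite /= e_sym exy.
Qed.

Lemma forest_leaf : (exists a b, e a b) -> exists u v, e u v /\ forall w, e u w -> w = v.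
Proof.
case=> a [b eab]; apply: (@leaf_of_path #|T| a b [::]) => //=; last by rewrite eab.
by rewrite inE andbT; apply: contraTneq eab => ->; rewrite e_irr.
Qed.

Definition e_without (v : T) : rel T := [rel x y | [&& e x y, x != v & y != v]].

Lemma e_without_sym v : symmetric (e_without v).
Proof. by move=> x y; rewrite /e_without /= e_sym [(x != v) && _]andbC. Qed.

Lemma path_e_without v x q : path (e_without v) x q -> v \notin q.
Proof.
elim: q x => //= y q IHq x /andP[/and3P[_ _ yv] /IHq].
by rewrite inE negb_or eq_sym yv.
Qed.

Lemma nbrs_disconnected v w1 w2 : e v w1 -> e v w2 -> w1 != w2 ->
  ~~ connect (e_without v) w1 w2.
Proof.
move=> ew1 ew2 w12; apply/negP => /connectP [p p_path p_last].
case: (shortenP p_path) p_last => q q_path q_uniq _ q_last.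
have w1v : w1 != v by apply: contraTneq ew1 => ->; rewrite e_irr.
have q_nil : q != [::] by apply: contraNneq w12 => q0; rewrite q_last q0.
have c_uniq : uniq (v :: w1 :: q).
  by rewrite /= inE negb_or eq_sym w1v (path_e_without q_path).
have c_size : 3 <= size (v :: w1 :: q) by case: q q_nil {q_path q_uniq q_last c_uniq}.
case/negP: (e_acyclic c_uniq c_size).
rewrite /= rcons_path ew1 -q_last e_sym ew2 andbT.
by apply: sub_path q_path => x y /andP[].
Qed.

Definition side (v : T) (W : {set T}) (y : T) : bool :=
  (y != v) && [exists w in W, connect (e_without v) w y].

Lemma side_edge v W y z : y != v -> z != v -> e y z -> side v W z = side v W y.
Proof.
move=> yv zv eyz; rewrite /side yv zv /=; apply: eq_existsb => w.
have yz : connect (e_without v) y z by apply: connect1; rewrite /e_without /= eyz yv zv.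
have zy : connect (e_without v) z y by rewrite (sym_connect_sym (@e_without_sym v)).
by apply/andb_id2l => _; apply/idP/idP => /connect_trans; [apply | apply].
Qed.

Lemma side_nbr v (W : {set T}) w : W \subset [set x | e v x] -> e v w ->
  side v W w = (w \in W).
Proof.
move=> W_nbrs evw; have wv : w != v by apply: contraTneq evw => ->; rewrite e_irr.
rewrite /side wv /=; apply/existsP/idP => [[w' /andP[w'W w'w]]|wW].
  apply: contraLR w'w => wNW; apply: nbrs_disconnected => //.
    by move/subsetP: W_nbrs => /(_ w' w'W); rewrite inE.
  by apply: contraNneq wNW => <-.
by exists w; rewrite wW connect0.
Qed.

Section LeafProfile.
Variables (u v : T) (W : {set T}).
Hypotheses (euv : e u v) (u_leaf : forall w, e u w -> w = v).
Hypotheses (W_nbrs : W \subset [set x | e v x]) (uW : u \in W).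
(* v trails by one or two neighbours: it is unhappy, yet u alone can rescue it. *)
Hypothesis W_half : #|[set x | e v x]| < #|W|.*2 <= (#|[set x | e v x]|).+2.

Local Notation s := (side v W).

Lemma side_v : s v = false.
Proof. by rewrite /side eqxx. Qed.

Lemma side_u : s u = true.
Proof. by rewrite side_nbr // e_sym. Qed.

Lemma nbr_count_side_v : nbr_count e s v true = #|W|.
Proof.
apply: eq_card => x; rewrite !inE eqb_id; apply/andP/idP => [[evx]|xW].
  by rewrite side_nbr.
have evx : e v x by move/subsetP: W_nbrs => /(_ x xW); rewrite inE.
by rewrite side_nbr.
Qed.

Lemma side_v_unhappy : ~ BR e s v (s v).
Proof.
apply/(notBR_count e_irr); have := nbr_countC e s v true.
by rewrite side_v nbr_count_side_v /=; lia.
Qed.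

Lemma side_u_unhappy : ~ BR e s u (s u).
Proof.
have u_nbrs : [set x | e u x] = [set v].
  by apply/setP => x; rewrite !inE; apply/idP/eqP => [/u_leaf|->].
apply/(notBR_count e_irr); have := nbr_countC e s u true.
rewrite side_u u_nbrs cards1 (nbr_count0 (b := true)) => [/=|x /u_leaf->].
  by lia.
by rewrite side_v.
Qed.

Lemma side_unhappy_off_v i : i != v -> ~ BR e s i (s i) ->
  [/\ e i v, s i = true & nbr_count e s i false <= 1].
Proof.
move=> iv unhappy_i.
have same_side z : e i z -> z != v -> s z = s i by move=> eiz zv; apply: side_edge.
have eiv : e i v.
  apply: contraT => eNiv; exfalso; apply: unhappy_i; apply/(BR_count e_irr).
  rewrite nbr_count0 // => z eiz; rewrite same_side //; first by case: (s i).
  by apply: contraNneq eNiv => <-.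
have si : s i = true.
  case si: (s i) => //; exfalso; apply: unhappy_i; apply/(BR_count e_irr).
  rewrite si nbr_count0 // => z eiz.
  by case: (eqVneq z v) => [->|zv]; rewrite ?side_v ?same_side ?si.
split=> //; rewrite -(cards1 v); apply: subset_leq_card; apply/subsetP => z.
rewrite !inE => /andP[eiz /eqP szi]; apply: contraT => zv.
by move: szi; rewrite same_side // si.
Qed.

Lemma side_rescue i : ~ BR e s i (s i) -> exists j, [/\ e i j, s j = ~~ s i,
  ~ BR e s j (s j) & nbr_count e s i (~~ s i) <= (nbr_count e s i (s i)).+2].
Proof.
have [->|iv] := eqVneq i v => unhappy_i.
  exists u; split; first by rewrite e_sym.
  - by rewrite side_u side_v.
  - exact: side_u_unhappy.
  - by have := nbr_countC e s v false; rewrite side_v nbr_count_side_v /=; lia.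
have [eiv si only_v] := side_unhappy_off_v iv unhappy_i.
exists v; split=> //; first by rewrite side_v si.
  exact: side_v_unhappy.
by rewrite si /=; lia.
Qed.

Lemma side_ST : stable_transition e (NE e) s /\ ~ NE e s.
Proof.
split; first exact: (stable_transition_NE e_irr side_rescue).
by move/(_ v); apply: side_v_unhappy.
Qed.

End LeafProfile.

Lemma forest_ST : (exists a b, e a b) ->
  exists s, stable_transition e (NE e) s /\ ~ NE e s.
Proof.
move=> /forest_leaf [u [v [euv u_leaf]]]; set N := [set x | e v x].
have uN : u \in N by rewrite inE e_sym.
have [B BN cardB] : exists2 B : {set T}, B \subset N :\ u & #|B| = #|N|./2.
  by apply: subset_of_card; have := cardsD1 u N; rewrite uN /=; lia.
have uB : u \notin B by apply/negP => /(subsetP BN); rewrite !inE eqxx.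
exists (side v (u |: B)); apply: (side_ST euv u_leaf); last 1 first.
- by rewrite cardsU1 uB cardB -/N /=; lia.
- by rewrite subUset sub1set uN (subset_trans BN) ?subsetDl.
- exact: setU11.
Qed.

End Forest.

Theorem theorem5 :
  (* (1) cycles on n >= 4 nodes *)
  (forall n : nat, 4 <= n ->
     (exists s : 'I_n -> bool,
        stable_transition (cycle_graph n) (NE (cycle_graph n)) s /\ ~ NE (cycle_graph n) s) /\
     (~~ odd n ->
       exists s : 'I_n -> bool,
        [/\ stable_transition (cycle_graph n) (NE (cycle_graph n)) s, ~ NE (cycle_graph n) s &
            ((sw (cycle_graph n) s)%:Z = (nedges (cycle_graph n))%:Z - (#|'I_n|)%:Z)%R])) /\
  (* (2) complete graphs on n >= 1 nodes *)
  (forall n : nat, 0 < n ->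
     ((exists s : 'I_n -> bool,
        stable_transition (complete_graph n) (NE (complete_graph n)) s /\ ~ NE (complete_graph n) s)
      <-> ~~ odd n)) /\
  (* (3) forests with at least one edge *)
  (forall (T : finType) (e : rel T), forest e -> (exists i j, e i j) ->
     exists s : T -> bool, stable_transition e (NE e) s /\ ~ NE e s).
Proof.
split.
  move=> n n_gt3; have n_gt2 := ltnW n_gt3.
  have [alt_ST alt_notNE] := (alternating_ST n_gt3, alternating_notNE n_gt2).
  split; first by exists (@alternating n).
  move=> n_even; exists (@alternating n); split=> //.
  by rewrite alternating_sw_even // (nedges_cycle_graph n_gt2) card_ord GRing.subrr.
split.
  move=> n n_gt0; split=> [[s [s_ST s_notNE]]|]; last exact: complete_even_ST.
  by apply/negP => n_odd; apply/s_notNE/complete_odd_ST_NE.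
by move=> T e [[e_sym e_irr] e_acyclic]; apply: forest_ST.
Qed.
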